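(* Let $n$ be odd. For the Erdős–Rényi random graph $\mathcal{G}(n,p)$, there exists $0<p_0<1$ such that $W_2(p)\geq 0.5$ for all $p\geq p_0$, where $W_2(p)$ is the probability that $\mathcal{G}(n,p)$ is a $\mathcal{P}$ position for Grim.
   Context: Grim is a two-player game on a finite simple undirected graph. Any isolated vertices of the starting graph are deleted before play begins. Players alternate moves; a move consists of selecting a vertex of the current graph and deleting it together with all its incident edges, after which every vertex that has become isolated is also deleted. The player who makes the last legal move wins (a player facing the empty graph has no move and loses; the empty graph is a $\mathcal{P}$ position). A graph is an $\mathcal{N}$ position if the player about to move has a winning strategy, and a $\mathcal{P}$ position otherwise. $\mathcal{G}(n,p)$ is the random graph on $n$ labeled vertices in which each of the $\binom{n}{2}$ possible edges is present independently with probability $p$; thus $W_2(p)=\sum_{G} p^{|E(G)|}(1-p)^{\binom n2-|E(G)|}$, the sum over all graphs $G$ on the $n$ labeled vertices that are $\mathcal{P}$ positions. *)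

From HB Require Import structures.
From mathcomp Require Import all_boot all_order all_algebra.
From mathcomp Require Import reals.
Set Implicit Arguments. Unset Strict Implicit. Unset Printing Implicit Defensive.
Import Order.TTheory GRing.Theory Num.Theory.

(* Since isolated vertices are
   deleted in Grim, a Grim position is determined by its edge set alone: the
   vertex set of the current graph is the set of endpoints of its edges. *)

Definition is_graph n (E : {set {set 'I_n}}) : bool :=
  [forall e in E, #|e| == 2].

Definition gverts n (E : {set {set 'I_n}}) : {set 'I_n} :=
  \bigcup_(e in E) e.

Definition grim_move n (E : {set {set 'I_n}}) (v : 'I_n) : {set {set 'I_n}} :=
  [set e in E | v \notin e].

(* N-position with a fuel parameter; each move deletes at least one edge, so
   fuel #|E| is enough to compute the exact game value. *)
Fixpoint grimN_fuel n (k : nat) (E : {set {set 'I_n}}) : bool :=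
  if k is k'.+1 then
    [exists v, (v \in gverts E) && ~~ grimN_fuel k' (grim_move E v)]
  else false.

Definition grimN n (E : {set {set 'I_n}}) : bool := grimN_fuel #|E| E.
Definition grimP n (E : {set {set 'I_n}}) : bool := ~~ grimN E.

Local Open Scope ring_scope.

Definition W2 (R : realType) (n : nat) (p : R) : R :=
  \sum_(E : {set {set 'I_n}} | is_graph E && grimP E)
     p ^+ #|E| * (1 - p) ^+ ('C(n, 2) - #|E|)%N.

From mathcomp Require Import all_boot all_order all_algebra.
From mathcomp Require Import reals.
From mathcomp Require Import zify ring lra.
Import Order.TTheory GRing.Theory Num.Theory.
Set Implicit Arguments. Unset Strict Implicit.

(* On a clique every move just deletes one vertex and leaves a clique, so Grim
   on K_s lasts exactly s - 1 moves and the first player wins iff s is even.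
   Hence the complete graph K_n, n odd, is a P-position, and it alone has
   probability p ^ C(n,2) in G(n,p); by Bernoulli's inequality this is at
   least 1/2 once 1 - p <= 1 / (2 (C(n,2) + 1)). *)

Definition clique n (S : {set 'I_n}) : {set {set 'I_n}} :=
  [set e : {set 'I_n} | (e \subset S) && (#|e| == 2)].

Lemma is_graph_clique n (S : {set 'I_n}) : is_graph (clique S).
Proof. by apply/forallP=> e; apply/implyP; rewrite inE => /andP[]. Qed.

Lemma gverts_clique n (S : {set 'I_n}) v :
  (v \in gverts (clique S)) = (2 <= #|S|) && (v \in S).
Proof.
apply/bigcupP/andP.
- move=> [e]; rewrite inE => /andP[eS /eqP e2] ve; split.
    by rewrite -e2 subset_leq_card.
  exact: (subsetP eS).
- move=> [S2 vS].
  have : 0 < #|S :\ v| by rewrite (cardsD1 v S) vS in S2; lia.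
  move/card_gt0P=> [w]; rewrite !inE => /andP[wv wS].
  exists [set v; w]; last by rewrite !inE eqxx.
  rewrite inE cards2 [v == w]eq_sym wv andbT.
  by apply/subsetP=> x; rewrite !inE => /orP[]/eqP->.
Qed.

Lemma grim_move_clique n (S : {set 'I_n}) v :
  grim_move (clique S) v = clique (S :\ v).
Proof.
apply/setP=> e; rewrite !inE subsetD1.
by case: (e \subset S); case: (#|e| == 2); case: (v \in e).
Qed.

Lemma grimN_fuel_clique n k (S : {set 'I_n}) : #|S| <= k.+1 ->
  grimN_fuel k (clique S) = (2 <= #|S|) && ~~ odd #|S|.
Proof.
elim: k S => [|k IH] S hS /=.
  by have /negbTE -> : ~~ (2 <= #|S|) by rewrite -ltnNge.
have moveE v : v \in S ->
    grimN_fuel k (grim_move (clique S) v) = (2 <= #|S|.-1) && odd #|S|.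
  move=> vS; rewrite grim_move_clique IH; last by rewrite (cardsD1 v S) vS in hS.
  by rewrite (cardsD1 v S) vS /=.
apply/existsP; case: ifP => [/andP[S2 evenS] | winS].
- have [v vS] : exists v, v \in S by apply/card_gt0P; apply: leq_trans S2.
  exists v; rewrite gverts_clique S2 vS moveE //=.
  by move: S2 evenS; case: #|S| => [|[|[|s]]] //= _ /negbTE ->; rewrite andbF.
- move=> [v /andP[]]; rewrite gverts_clique => /andP[S2 vS].
  rewrite moveE //; move: S2 winS; case: #|S| => [|[|[|s]]] //= _.
  by rewrite negbK => ->.
Qed.

Lemma card_complete n : #|clique [set: 'I_n]| = 'C(n, 2).
Proof.
rewrite -[in RHS](card_ord n) -card_draws; congr #|pred_of_set _|.
by apply/setP=> e; rewrite !inE subsetT.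
Qed.

Lemma grimP_complete n : odd n -> grimP (clique [set: 'I_n]).
Proof.
move=> oddn; rewrite /grimP /grimN grimN_fuel_clique cardsT card_ord ?oddn ?andbF //.
by rewrite card_complete; case: n {oddn} => [|n] //; rewrite binS bin1; lia.
Qed.

Local Open Scope ring_scope.

Lemma ler_bernoulli (R : realDomainType) (x : R) m :
  -1 <= x -> 1 + m%:R * x <= (1 + x) ^+ m.
Proof.
move=> x_ge; elim: m => [|m IH]; first by rewrite mul0r addr0 expr0.
have x1 : 0 <= 1 + x by lra.
have step : (1 + x) * (1 + m%:R * x) <= (1 + x) * (1 + x) ^+ m.
  exact: ler_wpM2l.
have sq : 0 <= m%:R * (x * x) by rewrite mulr_ge0 ?ler0n // -expr2 sqr_ge0.
by rewrite exprS -natr1; nra.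
Qed.

Lemma half_le_expr (R : realFieldType) (p : R) m :
  1 - (m.+1%:R * 2)^-1 <= p -> p <= 1 -> 2^-1 <= p ^+ m.
Proof.
move=> p_ge p_le1; set q := (m.+1%:R * 2)^-1 in p_ge.
have m0 : 0 <= (m%:R : R) := ler0n _ m.
have q0 : 0 <= q by rewrite invr_ge0 mulr_ge0.
have q1 : q <= 1 by rewrite invf_le1 ?mulr_gt0 // -natrM ler1n muln_gt0.
have qE : q * (m%:R + 1) = 2^-1.
  by rewrite /q -natr1; field; rewrite natr1 pnatr_eq0.
have bern : 1 + m%:R * (p - 1) <= p ^+ m.
  by have := @ler_bernoulli _ (p - 1) m; rewrite addrCA subrr addr0; apply; lra.
have : m%:R * (1 - p) <= m%:R * q by apply: ler_wpM2l => //; lra.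
lra.
Qed.

Lemma W2_ge_complete (R : realType) n (p : R) : odd n -> 0 <= p <= 1 ->
  p ^+ 'C(n, 2) <= W2 n p.
Proof.
move=> oddn /andP[p0 p1].
rewrite /W2 (bigD1 (clique [set: 'I_n])) ?is_graph_clique ?grimP_complete //=.
rewrite card_complete subnn expr0 mulr1 lerDl sumr_ge0 // => E _.
by rewrite mulr_ge0 ?exprn_ge0 ?subr_ge0.
Qed.

Theorem theorem6p4 (R : realType) (n : nat) (hn : odd n) :
  exists p0 : R, 0 < p0 < 1 /\
    forall p : R, p0 <= p -> p <= 1 -> 2^-1 <= W2 n p.
Proof.
set q : R := ('C(n, 2).+1%:R * 2)^-1.
have q_gt0 : 0 < q by rewrite invr_gt0 mulr_gt0.
have q_lt1 : q < 1 by rewrite invf_lt1 ?mulr_gt0 // -natrM ltr1n muln2 -addnn; lia.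
exists (1 - q); split; first by apply/andP; split; lra.
move=> p p_ge p_le1.
apply: le_trans (half_le_expr p_ge p_le1) (W2_ge_complete hn _).
by apply/andP; split; lra.
Qed.
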